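(* Let $\mathfrak g$ be a Lie ring satisfying $\mathrm{ad}(u)\,\mathrm{ad}([u,w])=0$ for all $u,w\in\mathfrak g$. If $\mathfrak g$ is generated by finitely many elements of the form $[x,y]$ with $x,y\in\mathfrak g$, then $\mathfrak g$ is nilpotent.
   Context: For $u\in\mathfrak g$, $\mathrm{ad}(u):\mathfrak g\to\mathfrak g$ is $v\mapsto[v,u]$. Maps are composed left to right: $v\,\mathrm{ad}(u)\mathrm{ad}(w)=[[v,u],w]$. *)

From mathcomp Require Import all_boot all_algebra.
Set Implicit Arguments. Unset Strict Implicit. Unset Printing Implicit Defensive.
Import GRing.Theory.
Local Open Scope ring_scope.

Definition is_lie_ring (L : zmodType) (br : L -> L -> L) : Prop :=
  [/\ (forall x y z, br (x + y) z = br x z + br y z),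
      (forall x y z, br x (y + z) = br x y + br x z),
      (forall x, br x x = 0)
    & (forall x y z, br (br x y) z + br (br y z) x + br (br z x) y = 0)].

Inductive lie_gen (L : zmodType) (br : L -> L -> L) (S : seq L) : L -> Prop :=
| lie_gen_base x : x \in S -> lie_gen br S x
| lie_gen_0 : lie_gen br S 0
| lie_gen_N x : lie_gen br S x -> lie_gen br S (- x)
| lie_gen_D x y : lie_gen br S x -> lie_gen br S y -> lie_gen br S (x + y)
| lie_gen_br x y : lie_gen br S x -> lie_gen br S y -> lie_gen br S (br x y).

Inductive add_span (L : zmodType) (A : L -> Prop) : L -> Prop :=
| add_span_base x : A x -> add_span A x
| add_span_0 : add_span A 0
| add_span_N x : add_span A x -> add_span A (- x)
| add_span_D x y : add_span A x -> add_span A y -> add_span A (x + y).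

Fixpoint lcs (L : zmodType) (br : L -> L -> L) (k : nat) : L -> Prop :=
  match k with
  | 0 => fun _ => True
  | k'.+1 => add_span (fun z => exists a x, lcs br k' a /\ z = br a x)
  end.

Definition lie_nilpotent (L : zmodType) (br : L -> L -> L) : Prop :=
  exists k, forall x, lcs br k x -> x = 0.

From mathcomp Require Import all_boot all_algebra.
Set Implicit Arguments. Unset Strict Implicit. Unset Printing Implicit Defensive.
Import GRing.Theory.
Local Open Scope ring_scope.

(* Since the generators are brackets, every element is a sum of brackets, so
   [g = [g, g] = [[g, g], [g, g]]].  Linearizing the hypothesis makes
   [(a, b, c, d) |-> [[a, b], [c, d]]] antisymmetric in all four arguments; the
   even permutation exchanging the two inner brackets then changes its sign,
   so [2 g = 0].  In characteristic 2, [[[v, u], [t, w]], [x, y]] turns out to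
   be symmetric in its six arguments and equal to twice itself, hence zero.
   Thus [[g, g] = [[[g, g], [g, g]], [g, g]] = 0] and [g = 0]. *)

Section LieRing.

Variables (L : zmodType) (br : L -> L -> L).
Hypothesis hlie : is_lie_ring br.

Lemma brDl x y z : br (x + y) z = br x z + br y z.
Proof. by case: hlie. Qed.

Lemma brDr x y z : br x (y + z) = br x y + br x z.
Proof. by case: hlie. Qed.

Lemma brxx x : br x x = 0.
Proof. by case: hlie. Qed.

Lemma jacobi x y z : br (br x y) z + br (br y z) x + br (br z x) y = 0.
Proof. by case: hlie. Qed.

Lemma br0l z : br 0 z = 0.
Proof. by apply: (@addrI _ (br 0 z)); rewrite addr0 -brDl addr0. Qed.

Lemma br0r z : br z 0 = 0.
Proof. by apply: (@addrI _ (br z 0)); rewrite addr0 -brDr addr0. Qed.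

Lemma brNl x y : br (- x) y = - br x y.
Proof. by apply/eqP; rewrite -subr_eq0 opprK -brDl addNr br0l. Qed.

Lemma brNr x y : br x (- y) = - br x y.
Proof. by apply/eqP; rewrite -subr_eq0 opprK -brDr addNr br0r. Qed.

Lemma brC x y : br x y = - br y x.
Proof.
apply/eqP; rewrite -addr_eq0.
by have := brxx (x + y); rewrite brDl !brDr !brxx add0r addr0 => ->.
Qed.

Lemma add_span_br (P Q R : L -> Prop) x y :
  (forall a b, P a -> Q b -> R (br a b)) ->
  add_span P x -> add_span Q y -> add_span R (br x y).
Proof.
move=> PQR spx spy; elim: spx => [a Pa| |a _ IHa|a c _ IHa _ IHc].
- elim: spy => [b Qb| |b _ IHb|b d _ IHb _ IHd].
  + exact/add_span_base/PQR.
  + by rewrite br0r; apply: add_span_0.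
  + by rewrite brNr; apply: add_span_N.
  + by rewrite brDr; apply: add_span_D.
- by rewrite br0l; apply: add_span_0.
- by rewrite brNl; apply: add_span_N.
- by rewrite brDl; apply: add_span_D.
Qed.

Section AdCondition.

Hypothesis hcond : forall u w v : L, br (br v u) (br u w) = 0.

Lemma brbr_swap_mid_opp v u t w :
  br (br v u) (br t w) = - br (br v t) (br u w).
Proof.
apply/eqP; rewrite -addr_eq0.
by have := hcond (u + t) w v; rewrite !(brDl, brDr) !hcond add0r addr0 => ->.
Qed.

Lemma brbr_double a b c d : br (br a b) (br c d) + br (br a b) (br c d) = 0.
Proof.
have {1}-> : br (br a b) (br c d) = br (br c d) (br a b).
  rewrite brbr_swap_mid_opp (brC a c) brNl opprK brbr_swap_mid_opp.
  by rewrite (brC a d) brNr opprK brbr_swap_mid_opp (brC b a) brNr opprK.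
by rewrite brC addNr.
Qed.

Section Char2.

Hypothesis char2 : forall x : L, x + x = 0.

Lemma oppr_char2 (x : L) : - x = x.
Proof. by apply/eqP; rewrite eq_sym -subr_eq0 opprK char2. Qed.

Lemma brC_char2 x y : br x y = br y x.
Proof. by rewrite brC oppr_char2. Qed.

Lemma brbr_swap_mid a b c d : br (br a b) (br c d) = br (br a c) (br b d).
Proof. by rewrite brbr_swap_mid_opp oppr_char2. Qed.

Lemma jacobi_char2 x y z : br (br x y) z = br (br y z) x + br (br z x) y.
Proof.
by apply/eqP; rewrite -subr_eq0 opprD oppr_char2 oppr_char2 addrA jacobi.
Qed.

(* [v, u] is opened by the Jacobi identity once it has been moved next to [x]. *)
Lemma brbr_br_jacobi v u b x y :
  br (br (br v u) b) (br x y) =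
  br (br (br u x) b) (br v y) + br (br (br x v) b) (br u y).
Proof.
rewrite brbr_swap_mid (jacobi_char2 v u x) brDl.
by rewrite [br (br (br u x) v) _]brbr_swap_mid [br (br (br x v) u) _]brbr_swap_mid.
Qed.

Lemma brbr_br_eq0 v u t w x y :
  br (br (br v u) (br t w)) (br x y) = 0.
Proof.
pose G a b c d e f := br (br (br a b) (br c d)) (br e f).
have G_swap12 a b c d e f : G a b c d e f = G b a c d e f by rewrite /G (brC_char2 a).
have G_swap23 a b c d e f : G a b c d e f = G a c b d e f.
  by rewrite /G (brbr_swap_mid a b c d).
have G_jacobi a b c d e f : G a b c d e f = G b e c d a f + G e a c d b f.
  exact: brbr_br_jacobi.
(* Two instances of [G_jacobi] with the same left-hand side up to symmetry
   exchange an inner and an outer argument. *)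
have G_exchange a b c d e f : G a b c d e f = G a b e d c f.
  have lhs_sym : G e a c d b f = G c a e d b f by rewrite G_swap12 G_swap23 G_swap12.
  have summand_sym : G b e c d a f = G b c e d a f by rewrite G_swap23.
  have := G_jacobi e a c d b f; rewrite lhs_sym summand_sym (G_jacobi c a e d b f).
  by move/addIr.
have first_summand : G u x t w v y = G v u t w x y.
  by rewrite G_swap23 G_exchange G_swap23 G_swap12.
have second_summand : G x v t w u y = G v u t w x y.
  by rewrite G_swap12 G_swap23 G_exchange G_swap23.
by have := G_jacobi v u t w x y; rewrite first_summand second_summand char2.
Qed.

End Char2.

End AdCondition.

End LieRing.

Lemma add_span_mono (L : zmodType) (P R : L -> Prop) x :
  (forall z, P z -> add_span R z) -> add_span P x -> add_span R x.
Proof.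
move=> PR; elim=> [z /PR //| |z _|z y _ IHz _ IHy].
- exact: add_span_0.
- exact: add_span_N.
- exact: add_span_D.
Qed.

Lemma add_span_char2 (L : zmodType) (P : L -> Prop) x :
  add_span P x -> (forall z, P z -> z + z = 0) -> x + x = 0.
Proof.
move=> spx P2; elim: spx => [z /P2 //| |z _ IH|z y _ IHz _ IHy].
- by rewrite addr0.
- by rewrite -opprD IH oppr0.
- by rewrite addrACA IHz IHy addr0.
Qed.

Lemma add_span_eq0 (L : zmodType) x : add_span (fun z : L => z = 0) x -> x = 0.
Proof. by elim=> [z //| //|z _ ->|z y _ -> _ ->]; rewrite ?oppr0 ?addr0. Qed.

Lemma lie_gen_add_span_br (L : zmodType) (br : L -> L -> L) (S : seq L) z :
  (forall s, s \in S -> exists x y, s = br x y) -> lie_gen br S z ->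
  add_span (fun a => exists x y, a = br x y) z.
Proof.
move=> hS; elim=> [s /hS sbr| |x _|x y _ IHx _ IHy|x y _ _ _ _].
- exact: add_span_base.
- exact: add_span_0.
- exact: add_span_N.
- exact: add_span_D.
- by apply: add_span_base; exists x, y.
Qed.

Theorem lemma4p6 (L : zmodType) (br : L -> L -> L) (hlie : is_lie_ring br)
  (hcond : forall u w v : L, br (br v u) (br u w) = 0)
  (S : seq L) (hS : forall s, s \in S -> exists x y, s = br x y)
  (hgen : forall z : L, lie_gen br S z) :
  lie_nilpotent br.
Proof.
have span_br z : add_span (fun a => exists x y, a = br x y) z.
  exact: lie_gen_add_span_br hS (hgen z).
have span_brbr z :
    add_span (fun a => exists x y u w, a = br (br x y) (br u w)) z.
  apply: add_span_mono (span_br z) => _ [a [b ->]].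
  apply: (add_span_br hlie _ (span_br a) (span_br b)).
  move=> _ _ [x [y ->]] [u [w ->]].
  by exists x, y, u, w.
have char2 (x : L) : x + x = 0.
  apply: (add_span_char2 (span_brbr x)) => _ [a [b [c [d ->]]]].
  exact: brbr_double.
have br_eq0 p q : br p q = 0.
  apply/add_span_eq0/(add_span_br hlie _ (span_brbr p) (span_br q)).
  by move=> _ _ [v [u [t [w ->]]]] [x [y ->]]; apply: brbr_br_eq0.
exists 0%N => z _; apply: add_span_eq0.
by apply: add_span_mono (span_br z) => _ [a [b ->]]; apply: add_span_base.
Qed.
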